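(* For all $a,b\in\mathbb{R}$, the matrix $$M_{10}^{(2)}(a,b)=\begin{bmatrix} 1 & 1 & 1 & 1 & 1 & 1 & 1 & 1 & 1 & 1 \\ 1 & \mathrm{i} & \mathrm{i} e^{\mathrm{i} b} & e^{\mathrm{i} b} & -\mathrm{i} & -e^{\mathrm{i} b} & e^{\mathrm{i} b} & -\mathrm{i} e^{\mathrm{i} b} & -e^{\mathrm{i} b} & -1 \\ 1 & -1 & -\mathrm{i} e^{\mathrm{i} b} & -e^{\mathrm{i} a} & e^{\mathrm{i} a} & \mathrm{i} e^{\mathrm{i} b} & -\mathrm{i} e^{\mathrm{i} a} & e^{\mathrm{i} a} & -e^{\mathrm{i} a} & \mathrm{i} e^{\mathrm{i} a} \\ 1 & \mathrm{i} & -\mathrm{i} & -\mathrm{i} e^{\mathrm{i} a} & \mathrm{i} & -\mathrm{i} & \mathrm{i} e^{\mathrm{i} a} & -1 & -1 & 1 \\ 1 & 1 & \mathrm{i} & -1 & \mathrm{i} & \mathrm{i} & -1 & -\mathrm{i} & -\mathrm{i} & -\mathrm{i} \\ 1 & -\mathrm{i} & -1 & e^{\mathrm{i} a} & 1 & -1 & -e^{\mathrm{i} a} & -1 & 1 & \mathrm{i} \\ 1 & \mathrm{i} & e^{\mathrm{i} b} & -e^{\mathrm{i} b} & -\mathrm{i} & -\mathrm{i} e^{\mathrm{i} b} & -e^{\mathrm{i} b} & \mathrm{i} e^{\mathrm{i} b} & e^{\mathrm{i} b} & -1 \\ 1 & -1 & -\mathrm{i} e^{\mathrm{i} b} & \mathrm{i}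 e^{\mathrm{i} a} & -e^{\mathrm{i} a} & \mathrm{i} e^{\mathrm{i} b} & e^{\mathrm{i} a} & -e^{\mathrm{i} a} & e^{\mathrm{i} a} & -\mathrm{i} e^{\mathrm{i} a} \\ 1 & -\mathrm{i} & \mathrm{i} e^{\mathrm{i} b} & \mathrm{i} e^{\mathrm{i} a} & -1 & -\mathrm{i} e^{\mathrm{i} b} & -\mathrm{i} e^{\mathrm{i} a} & \mathrm{i} & -1 & 1 \\ 1 & -\mathrm{i} & -e^{\mathrm{i} b} & -\mathrm{i} e^{\mathrm{i} a} & -1 & e^{\mathrm{i} b} & \mathrm{i} e^{\mathrm{i} a} & 1 & \mathrm{i} & -1 \end{bmatrix}$$ is a dephased complex Hadamard matrix, i.e. $M_{10}^{(2)}(a,b)\,M_{10}^{(2)}(a,b)^*=10\,I_{10}$.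
   Context: $^*$ denotes conjugate transpose; a dephased complex Hadamard matrix of order $d$ is a $d\times d$ matrix with unimodular entries, first row and first column all equal to $1$, and $HH^*=dI_d$. *)

From HB Require Import structures.
From mathcomp Require Import all_boot all_order all_algebra.
From mathcomp Require Import complex.
From mathcomp Require Import reals trigo.
Set Implicit Arguments. Unset Strict Implicit. Unset Printing Implicit Defensive.
Import Order.TTheory GRing.Theory Num.Theory.
Local Open Scope ring_scope.
Local Open Scope complex_scope.

Definition expi (R : realType) (x : R) : R[i] := (cos x) +i* (sin x).

Definition ctrmx (R : rcfType) (m n : nat) (A : 'M[R[i]]_(m, n)) : 'M[R[i]]_(n, m) :=
  map_mx (@conjc R) A^T.

(* dephased complex Hadamard matrix of order d (d >= 1, indices 'I_d.+1
   are used via d = n.+1 so that row/column 0 exist) *)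
Definition dephased_complex_hadamard (R : rcfType) (n : nat)
    (H : 'M[R[i]]_n.+1) : Prop :=
  [/\ (forall i j, `|H i j| = 1),
      (forall j, H ord0 j = 1),
      (forall i, H i ord0 = 1) &
      H *m ctrmx H = (n.+1)%:R%:M].

Section M10.
Variables (R : realType) (a b : R).
Local Notation I := ('i : R[i]).
Local Notation A := (expi a).
Local Notation B := (expi b).

Definition M10_2_rows : seq (seq R[i]) :=
 [:: [:: 1; 1; 1; 1; 1; 1; 1; 1; 1; 1];
     [:: 1; I; I * B; B; -I; -B; B; -I * B; -B; -1];
     [:: 1; -1; -I * B; -A; A; I * B; -I * A; A; -A; I * A];
     [:: 1; I; -I; -I * A; I; -I; I * A; -1; -1; 1];
     [:: 1; 1; I; -1; I; I; -1; -I; -I; -I];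
     [:: 1; -I; -1; A; 1; -1; -A; -1; 1; I];
     [:: 1; I; B; -B; -I; -I * B; -B; I * B; B; -1];
     [:: 1; -1; -I * B; I * A; -A; I * B; A; -A; A; -I * A];
     [:: 1; -I; I * B; I * A; -1; -I * B; -I * A; I; -1; 1];
     [:: 1; -I; -B; -I * A; -1; B; I * A; 1; I; -1]].

Definition M10_2 : 'M[R[i]]_10 :=
  \matrix_(i < 10, j < 10) nth 0 (nth [::] M10_2_rows i) j.
End M10.

From mathcomp Require Import all_boot all_algebra.
From mathcomp Require Import complex.
From mathcomp Require Import reals trigo.
Set Implicit Arguments.
Unset Strict Implicit.
Unset Printing Implicit Defensive.
Import GRing.Theory Num.Theory.
Local Open Scope ring_scope.

(* Every entry of M_10^(2)(a,b) is i^k times one of the unimodular phases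
   1, e^{ia}, e^{ib}.  The inner product of two rows is therefore a sum of
   terms i^d u, where u is a phase times the conjugate of a phase.  For
   distinct rows, adding 2 to every exponent d (modulo 4) only permutes the
   pairs (d, u); as i^2 = -1, the inner product equals its own negative and
   vanishes.  This is a finite check on exponents and phase indices, so it
   holds for every a and b.  The diagonal entries equal 10 because all
   entries are unimodular. *)

(* Multiplying every term i^k X(key) by i^2 = -1, i.e. adding 2 to every
   exponent k modulo 4, permutes the multiset of (exponent, key) pairs. *)
Definition half_turn_invariant (K : eqType) (s : seq (nat * K)) : bool :=
  perm_eq [seq ((p.1 %% 4)%N, p.2) | p <- s]
          [seq ((p.1.+2 %% 4)%N, p.2) | p <- s].

Lemma expr_mod4 (T : pzRingType) (u : T) n : u ^+ 2 = -1 -> u ^+ n = u ^+ (n %% 4)%N.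
Proof.
move=> u2; have u4 : u ^+ 4 = 1 by rewrite (exprM u 2 2) u2 sqrrN expr1n.
by rewrite {1}(divn_eq n 4) exprD mulnC exprM u4 expr1n mul1r.
Qed.

Lemma sum_half_turn_invariant_eq0 (T : numDomainType) (u : T) (K : eqType)
    (X : K -> T) (s : seq (nat * K)) :
  u ^+ 2 = -1 -> half_turn_invariant s -> \sum_(p <- s) u ^+ p.1 * X p.2 = 0.
Proof.
move=> u2 inv_s.
have sum_mod4 (e : nat -> nat) :
    \sum_(p <- s) u ^+ e p.1 * X p.2
    = \sum_(q <- [seq ((e p.1 %% 4)%N, p.2) | p <- s]) u ^+ q.1 * X q.2.
  by rewrite big_map; apply: eq_bigr => p _; rewrite -expr_mod4.
have half_turn : \sum_(p <- s) u ^+ p.1 * X p.2 = - \sum_(p <- s) u ^+ p.1 * X p.2.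
  rewrite -sumrN.
  under [RHS]eq_bigr => p _ do rewrite -mulNr -mulN1r -u2 -exprD add2n.
  by rewrite (sum_mod4 id) (sum_mod4 (fun n => n.+2)) (perm_big _ inv_s).
by apply/eqP; rewrite -eqNr -half_turn.
Qed.

Lemma expr3Ci (C : numClosedFieldType) : 'i ^+ 3 = - 'i :> C.
Proof. by rewrite exprS sqrCi mulrN1. Qed.

Lemma conjC_expr_i (C : numClosedFieldType) n : ('i ^+ n : C)^* = 'i ^+ (3 * n).
Proof. by rewrite rmorphXn /= conjCi exprM expr3Ci. Qed.

Lemma mulCJ_norm1 (C : numClosedFieldType) (x : C) : `|x| = 1 -> x * x^* = 1.
Proof. by rewrite -normCK => ->; rewrite expr1n. Qed.

Lemma mul_trmxJ_conj (C : numClosedFieldType) m n (A : 'M[C]_(m, n)) i j :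
  (A *m map_mx Num.conj A^T) j i = ((A *m map_mx Num.conj A^T) i j)^*.
Proof.
rewrite !mxE rmorph_sum; apply: eq_bigr => k _.
by rewrite !mxE rmorphM /= conjCK mulrC.
Qed.

Lemma norm_expi (R : realType) (x : R) : `|expi x| = 1.
Proof. by rewrite normc_def /= cos2Dsin2 sqrtr1. Qed.

Definition code_at (code : seq (seq (nat * nat))) (i j : nat) : nat * nat :=
  nth (0, 0) (nth [::] code i) j.

(* A phase times its own conjugate is 1 whatever the phase, so all such
   products share the key [None]. *)
Definition phase_key (e f : nat) : option (nat * nat) :=
  if e == f then None else Some (e, f).

(* The code of [code_entry c * (code_entry d)^*]: conjugation sends i^l to
   i^(3 l). *)
Definition cross_code (c d : nat * nat) : nat * option (nat * nat) :=
  (c.1 + 3 * d.1, phase_key c.2 d.2)%N.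

Definition cross_terms (n : nat) (code : seq (seq (nat * nat))) (i j : nat) :
    seq (nat * option (nat * nat)) :=
  [seq cross_code (code_at code i k) (code_at code j k) | k <- iota 0 n].

Section CodeMatrix.
Variables (C : numClosedFieldType) (phase : nat -> C).
Hypothesis norm_phase : forall e, `|phase e| = 1.

Definition code_entry (c : nat * nat) : C := 'i ^+ c.1 * phase c.2.

Definition phase_ratio (o : option (nat * nat)) : C :=
  if o is Some (e, f) then phase e * (phase f)^* else 1.

Definition code_mx n (code : seq (seq (nat * nat))) : 'M[C]_n :=
  \matrix_(i, j) code_entry (code_at code i j).

Lemma norm_code_entry c : `|code_entry c| = 1.
Proof. by rewrite normrM normrX normCi norm_phase expr1n mulr1. Qed.

Lemma code_entry_mulJ c d :
  code_entry c * (code_entry d)^* =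
  'i ^+ (cross_code c d).1 * phase_ratio (cross_code c d).2.
Proof.
rewrite /code_entry rmorphM /= conjC_expr_i mulrACA -exprD /phase_key.
by have [->|_] := eqVneq c.2 d.2; rewrite ?mulCJ_norm1.
Qed.

Lemma code_mx_mul_trmxJ n code i j :
  (code_mx n code *m map_mx Num.conj (code_mx n code)^T) i j =
  \sum_(p <- cross_terms n code i j) 'i ^+ p.1 * phase_ratio p.2.
Proof.
rewrite /cross_terms; have -> : iota 0 n = index_iota 0 n by rewrite /index_iota subn0.
rewrite mxE big_map big_mkord.
by apply: eq_bigr => k _; rewrite !mxE code_entry_mulJ.
Qed.

Lemma code_mx_mul_trmxJ_diag n code i :
  (code_mx n code *m map_mx Num.conj (code_mx n code)^T) i i = n%:R.
Proof.
rewrite mxE; under eq_bigr do rewrite !mxE mulCJ_norm1 ?norm_code_entry //.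
by rewrite sumr_const card_ord.
Qed.

Lemma code_mx_mul_trmxJ_offdiag n code (i j : 'I_n) :
  pairwise (fun i j => half_turn_invariant (cross_terms n code i j)) (iota 0 n) ->
  i != j -> (code_mx n code *m map_mx Num.conj (code_mx n code)^T) i j = 0.
Proof.
move=> /(pairwiseP 0) orth; wlog lt_ij : i j / (i < j)%N => [hwlog|_].
  case: (ltngtP i j) => [/hwlog//|lt_ji|/val_inj->]; last by rewrite eqxx.
  by rewrite mul_trmxJ_conj eq_sym => /(hwlog _ _ lt_ji)->; rewrite conjC0.
rewrite code_mx_mul_trmxJ; apply: sum_half_turn_invariant_eq0; first exact: sqrCi.
by have := orth i j; rewrite !inE size_iota !nth_iota ?ltn_ord //; apply.
Qed.

End CodeMatrix.

Lemma code_mx_dephased_hadamard (R : rcfType) (phase : nat -> R[i]) n code :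
  (forall e, `|phase e| = 1) -> phase 0 = 1 ->
  all (fun k => (code_at code 0 k == (0, 0)) && (code_at code k 0 == (0, 0)))
    (iota 0 n.+1) ->
  pairwise (fun i j => half_turn_invariant (cross_terms n.+1 code i j))
    (iota 0 n.+1) ->
  dephased_complex_hadamard (code_mx phase n.+1 code).
Proof.
move=> norm_phase phase0 /allP border orth.
have border_entry (k : 'I_n.+1) :
    code_entry phase (code_at code 0 k) = 1 /\ code_entry phase (code_at code k 0) = 1.
  have /border/andP[/eqP-> /eqP->] : val k \in iota 0 n.+1 by rewrite mem_iota ltn_ord.
  by rewrite /code_entry phase0 mulr1.
split.
- by move=> i j; rewrite mxE norm_code_entry.
- by move=> j; rewrite mxE (border_entry j).1.
- by move=> i; rewrite mxE (border_entry i).2.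
apply/matrixP => i j; rewrite [RHS]mxE.
have [<-|neq_ij] := eqVneq i j; first by rewrite code_mx_mul_trmxJ_diag.
by rewrite code_mx_mul_trmxJ_offdiag.
Qed.

(* (k, e) encodes i^k times the e-th of the phases 1, e^{ia}, e^{ib}. *)
Definition M10_2_code : seq (seq (nat * nat)) :=
  [:: [:: (0,0); (0,0); (0,0); (0,0); (0,0); (0,0); (0,0); (0,0); (0,0); (0,0)];
      [:: (0,0); (1,0); (1,2); (0,2); (3,0); (2,2); (0,2); (3,2); (2,2); (2,0)];
      [:: (0,0); (2,0); (3,2); (2,1); (0,1); (1,2); (3,1); (0,1); (2,1); (1,1)];
      [:: (0,0); (1,0); (3,0); (3,1); (1,0); (3,0); (1,1); (2,0); (2,0); (0,0)];
      [:: (0,0); (0,0); (1,0); (2,0); (1,0); (1,0); (2,0); (3,0); (3,0); (3,0)];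
      [:: (0,0); (3,0); (2,0); (0,1); (0,0); (2,0); (2,1); (2,0); (0,0); (1,0)];
      [:: (0,0); (1,0); (0,2); (2,2); (3,0); (3,2); (2,2); (1,2); (0,2); (2,0)];
      [:: (0,0); (2,0); (3,2); (1,1); (2,1); (1,2); (0,1); (2,1); (0,1); (3,1)];
      [:: (0,0); (3,0); (1,2); (1,1); (2,0); (3,2); (3,1); (1,0); (2,0); (0,0)];
      [:: (0,0); (3,0); (2,2); (3,1); (2,0); (0,2); (1,1); (0,0); (1,0); (2,0)]].

Section M10.
Variables (R : realType) (a b : R).
Local Notation phase := (nth 1 [:: 1; expi a; expi b]).

Lemma norm_M10_2_phase e : `|phase e| = 1.
Proof. by case: e => [|[|[|e]]]; rewrite /= ?nth_nil ?normr1 ?norm_expi. Qed.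

Lemma M10_2_rowsE :
  M10_2_rows a b = [seq [seq code_entry phase c | c <- r] | r <- M10_2_code].
Proof.
by rewrite /M10_2_rows /code_entry /= !expr0 !expr1 sqrCi expr3Ci !mul1r !mulr1 !mulN1r.
Qed.

Lemma M10_2E : M10_2 a b = code_mx phase 10 M10_2_code.
Proof.
apply/matrixP => i j; rewrite !mxE M10_2_rowsE /code_at.
have size_rows : all (fun r => size r == 10) M10_2_code by [].
by rewrite (nth_map [::]) // (nth_map (0, 0)) // (eqP (all_nthP [::] size_rows i _)).
Qed.

End M10.

Theorem mainTheorem4 (R : realType) (a b : R) :
  dephased_complex_hadamard (M10_2 a b).
Proof.
(* The conditions on [M10_2_code] are decided by evaluation. *)
rewrite M10_2E; apply: code_mx_dephased_hadamard => //.
exact: norm_M10_2_phase.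
Qed.
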